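(* 1. For every $i\in\mathcal{N}$, the random variable $Z_{i,\epsilon}$ converges surely (i.e. pointwise for every outcome) to $Z_i$ as $\epsilon\to+\infty$. 2. The limit $\lim_{\epsilon\to+\infty}\gamma(\epsilon)$ exists and $$\lim_{\epsilon\to+\infty}\Big(E\{Z_{i,\epsilon}\mid A_i=0,Y_i=1\}-E\{Z_{i,\epsilon}\mid A_i=1,Y_i=1\}\Big)=E\{Z_i\mid A_i=0,Y_i=1\}-E\{Z_i\mid A_i=1,Y_i=1\},$$ i.e. the algorithm $\mathscr{A}$ is $\gamma_\infty$-fair with $\gamma_\infty=\lim_{\epsilon\to+\infty}\gamma(\epsilon)$.
   Context: There are $n$ individuals indexed by $\mathcal{N}=\{1,\dots,n\}$. Individual $i$ is described by a random tuple $(X_i,A_i,Y_i)$, with features $X_i\in\mathcal{X}$, protected attribute $A_i\in\{0,1\}$ and qualification state $Y_i\in\{0,1\}$; the tuples are i.i.d. with a common distribution $\mathsf{F}$. A fixed function $r:\mathcal{X}\to\mathcal{R}$ is given, with $\mathcal{R}\subset[0,1]$ finite, and $R_i=r(X_i)$. Conditioning events $\{A_i=a,Y_i=1\}$ are assumed to have positive probability. For $\epsilon\ge0$, the exponential mechanism $\mathscr{A}_\epsilon$ selects $i$ with probability $Z_{i,\epsilon}=\exp(\epsilon R_i/2)/\sum_{j=1}^n\exp(\epsilon R_j/2)$ given the scores, and $\gamma(\epsilon)=E\{Z_{i,\epsilon}\mid A_i=0,Y_i=1\}-E\{Z_{i,\epsilon}\mid A_i=1,Y_i=1\}$. The algorithm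 $\mathscr{A}$ selects uniformly at random among the individuals with the highest score; with $N_{\max}=|\{i: R_i=\max_jR_j\}|$, let $Z_i=0$ if $R_i\ne\max_jR_j$ and $Z_i=1/N_{\max}$ otherwise, so $Z_i$ is the probability that $\mathscr{A}$ selects $i$ given the scores. An algorithm selecting one individual is $\gamma$-fair if $\Pr\{K_i=1\mid A_i=0,Y_i=1\}-\Pr\{K_i=1\mid A_i=1,Y_i=1\}=\gamma$, where $K_i$ is the indicator that $i$ is selected. *)

From HB Require Import structures.
From mathcomp Require Import all_boot all_order all_algebra.
From mathcomp Require Import all_classical all_reals all_analysis.
Set Implicit Arguments. Unset Strict Implicit. Unset Printing Implicit Defensive.
Import Order.TTheory GRing.Theory Num.Theory.
Import numFieldNormedType.Exports.
Local Open Scope classical_set_scope.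
Local Open Scope ring_scope.

Section Fair.
Context {d dX : measure_display} {T : measurableType d} {R : realType}
  {Xt : measurableType dX}.

Definition tupl (n : nat) (X : 'I_n -> T -> Xt) (A Y : 'I_n -> T -> bool)
  (i : 'I_n) : T -> Xt * bool * bool := fun w => (X i w, A i w, Y i w).

Definition ident_distr (P : probability T R) n (V : 'I_n -> T -> Xt * bool * bool) :=
  forall i j (S : set (Xt * bool * bool)), measurable S ->
    P (V i @^-1` S) = P (V j @^-1` S).

(* the tuples are mutually independent (product rule; taking S j = setT
   recovers every finite subfamily) *)
Definition mutual_indep (P : probability T R) n (V : 'I_n -> T -> Xt * bool * bool) :=
  forall S : 'I_n -> set (Xt * bool * bool), (forall j, measurable (S j)) ->
    P (\bigcap_(j in [set: 'I_n]) (V j @^-1` S j)) = (\prod_(j < n) P (V j @^-1` S j))%E.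

Definition evAY n (A Y : 'I_n -> T -> bool) (i : 'I_n) (a : bool) : set T :=
  [set w | A i w = a /\ Y i w = true].

Definition condE (P : probability T R) (W : T -> R) (B : set T) : R :=
  fine (\int[P]_(w in B) (W w)%:E) / fine (P B).

Definition Zeps n (Rs : 'I_n -> T -> R) (eps : R) (i : 'I_n) (w : T) : R :=
  expR (eps * Rs i w / 2) / \sum_(j < n) expR (eps * Rs j w / 2).

Definition is_top n (Rs : 'I_n -> T -> R) (w : T) (i : 'I_n) : bool :=
  [forall j, Rs j w <= Rs i w].

Definition Zmax n (Rs : 'I_n -> T -> R) (i : 'I_n) (w : T) : R :=
  if is_top Rs w i then (#|[set j | is_top Rs w j]|%:R)^-1 else 0.

Definition gamma (P : probability T R) n (A Y : 'I_n -> T -> bool)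
  (Rs : 'I_n -> T -> R) (i : 'I_n) (eps : R) : R :=
  condE P (Zeps Rs eps i) (evAY A Y i false) - condE P (Zeps Rs eps i) (evAY A Y i true).

End Fair.

From HB Require Import structures.
From mathcomp Require Import all_boot all_order all_algebra.
From mathcomp Require Import all_classical all_reals all_analysis.
From mathcomp Require Import measurable_realfun ring lra.
Import Order.TTheory GRing.Theory Num.Theory.
Import numFieldNormedType.Exports.
Local Open Scope classical_set_scope.
Local Open Scope ring_scope.

(* As eps grows, the exponential-mechanism weights concentrate uniformly on
   the top scorers: after dividing numerator and denominator by
   exp(eps R_i / 2), every term of the denominator tends to 1 when R_j = R_i
   and to 0 when R_j < R_i, while a non-maximal R_i is beaten by some R_j and
   its weight is at most exp(eps (R_i - R_j) / 2).  Since 0 <= Z_{i,eps} <= 1,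
   dominated convergence on each conditioning event carries this pointwise
   limit through the conditional expectations. *)

Section expR_limits.
Context {R : realType}.

Lemma cvgy_expR_mulr (c : R) : c < 0 -> expR (t * c) @[t --> +oo] --> 0.
Proof.
move=> c_lt0.
have -> : (fun t => expR (t * c)) = (fun t => expR (- t)) \o (fun t => t * - c).
  by apply: funext => t /=; rewrite mulrN opprK.
apply: cvg_comp; last exact: cvgr_expR.
apply/cvgryPge => M.
near=> t; rewrite -ler_pdivrMr ?oppr_gt0 //.
Unshelve. all: by end_near.
Qed.

Lemma expR_le_sum_expR {I : finType} (a : I -> R) (i : I) :
  expR (a i) <= \sum_j expR (a j).
Proof.
by rewrite (bigD1 i) //= lerDl; apply: sumr_ge0 => j _; exact: expR_ge0.
Qed.

End expR_limits.

Section exponential_mechanism.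
Context {d : measure_display} {T : measurableType d} {R : realType}.
Context {n : nat} (Rs : 'I_n -> T -> R).

Lemma sum_expR_gt0 (eps : R) (i : 'I_n) (w : T) :
  0 < \sum_j expR (eps * Rs j w / 2).
Proof. exact: lt_le_trans (expR_gt0 _) (expR_le_sum_expR _ i). Qed.

Lemma Zeps_ge0_le1 (eps : R) (i : 'I_n) (w : T) : 0 <= Zeps Rs eps i w <= 1.
Proof.
have S0 := sum_expR_gt0 eps i w.
by rewrite /Zeps divr_ge0 ?expR_ge0 ?(ltW S0) //= ler_pdivrMr // mul1r expR_le_sum_expR.
Qed.

Lemma Zeps_expR_lnE (eps : R) (i : 'I_n) (w : T) :
  Zeps Rs eps i w = expR (eps * Rs i w / 2 - ln (\sum_j expR (eps * Rs j w / 2))).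
Proof. by rewrite expRD expRN lnK // posrE (sum_expR_gt0 _ i). Qed.

Lemma measurable_Zeps (eps : R) (i : 'I_n) :
  (forall j, measurable_fun setT (Rs j)) -> measurable_fun setT (Zeps Rs eps i).
Proof.
move=> mRs.
have mE j : measurable_fun setT (fun w => eps * Rs j w / 2).
  by apply: measurable_funM => //; apply: measurable_funM.
have -> : Zeps Rs eps i =
    fun w => expR (eps * Rs i w / 2 - ln (\sum_j expR (eps * Rs j w / 2))).
  by apply: funext => w; exact: Zeps_expR_lnE.
apply: measurableT_comp; first exact: measurable_expR.
apply: measurable_funB; first exact: mE.
apply: measurableT_comp; first exact: measurable_ln.
by apply: measurable_sum => j; apply: measurableT_comp; first exact: measurable_expR.
Qed.

Lemma Zeps_cvg0 (i : 'I_n) (w : T) :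
  ~~ is_top Rs w i -> Zeps Rs eps i w @[eps --> +oo] --> 0.
Proof.
case/forallPn => j; rewrite -ltNge => Rij.
apply: (@squeeze_cvgr _ _ _ _ (fun=> 0) (fun eps => expR (eps * ((Rs i w - Rs j w) / 2)))).
- near=> eps; have [-> _ /=] := andP (Zeps_ge0_le1 eps i w).
  rewrite ler_pdivrMr ?(sum_expR_gt0 _ i) //.
  apply: le_trans (ler_wpM2l (expR_ge0 _) (expR_le_sum_expR _ j)).
  by rewrite -expRD ler_expR; lra.
- exact: cvg_cst.
- by apply: cvgy_expR_mulr; rewrite pmulr_llt0 // subr_lt0.
Unshelve. all: by end_near.
Qed.

Lemma Zeps_invE (eps : R) (i : 'I_n) (w : T) :
  Zeps Rs eps i w = (\sum_j expR (eps * (Rs j w - Rs i w) / 2))^-1.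
Proof.
have -> : \sum_j expR (eps * (Rs j w - Rs i w) / 2) =
    (\sum_j expR (eps * Rs j w / 2)) / expR (eps * Rs i w / 2).
  rewrite mulr_suml; apply: eq_bigr => j _.
  by rewrite -expRN -expRD; congr expR; ring.
by rewrite invfM invrK mulrC.
Qed.

Lemma is_top_eq {i : 'I_n} {w : T} :
  is_top Rs w i -> forall j, is_top Rs w j = (Rs j w == Rs i w).
Proof.
move=> /forallP top_i j; apply/forallP/eqP => [top_j|->] //.
by apply/eqP; rewrite eq_le top_i top_j.
Qed.

Lemma card_is_topE {i : 'I_n} {w : T} : is_top Rs w i ->
  #|[set j | is_top Rs w j]|%:R = \sum_j (Rs j w == Rs i w)%:R :> R.
Proof.
move=> top_i; rewrite -sumr_const big_mkcond /=.
apply: eq_bigr => j _.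
have -> : (j \in [set j | is_top Rs w j]) = is_top Rs w j.
  by apply/idP/idP => [/set_mem|/mem_set].
by rewrite (is_top_eq top_i); case: eqP.
Qed.

Lemma Zeps_cvg_top (i : 'I_n) (w : T) : is_top Rs w i ->
  Zeps Rs eps i w @[eps --> +oo] --> (#|[set j | is_top Rs w j]|%:R : R)^-1.
Proof.
move=> top_i; under eq_fun do rewrite Zeps_invE.
apply: cvgV.
  by rewrite pnatr_eq0 -lt0n; apply/card_gt0P; exists i; rewrite inE.
rewrite (card_is_topE top_i); apply: (cvg_big add_continuous) => j _.
case: eqP => [->|/eqP Rji].
  under eq_fun do rewrite subrr mulr0 mul0r expR0.
  exact: cvg_cst.
under eq_fun do rewrite -mulrA.
apply: cvgy_expR_mulr; rewrite pmulr_llt0 // subr_lt0 lt_neqAle Rji /=.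
exact: (forallP top_i).
Qed.

Lemma Zeps_cvg_Zmax (i : 'I_n) (w : T) :
  Zeps Rs eps i w @[eps --> +oo] --> Zmax Rs i w.
Proof.
by rewrite /Zmax; case: ifPn; [exact: Zeps_cvg_top | exact: Zeps_cvg0].
Qed.

End exponential_mechanism.

Section conditional_expectation.
Context {d : measure_display} {T : measurableType d} {R : realType}.
Variable P : probability T R.

Lemma condE_cvgy (M : R) (B : set T) (f : R -> T -> R) (g : T -> R) :
  measurable B -> (forall t, measurable_fun B (f t)) ->
  (forall t w, B w -> `|f t w| <= M) ->
  (forall w, B w -> f t w @[t --> +oo] --> g w) ->
  condE P (f t) B @[t --> +oo] --> condE P g B.
Proof.
move=> mB mf f_le f_g; apply/cvg_pinftyP => u u_oo.
have mfu k : measurable_fun B (fun w => (f (u k) w)%:E).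
  exact/measurable_EFinP.
have fu_g w : B w -> (f (u k) w)%:E @[k --> \oo] --> (g w)%:E.
  by move=> Bw; apply: cvg_EFin; [exact: nearW | exact: cvg_comp u_oo (f_g w Bw)].
have mg : measurable_fun B (fun w => (g w)%:E) := emeasurable_fun_cvg _ _ mfu fu_g.
have fu_le w k : B w -> (`|(f (u k) w)%:E| <= (EFin \o cst M) w)%E.
  by move=> Bw; rewrite /= lee_fin f_le.
have [ig _ int_cvg] := dominated_convergence mB mfu mg (aeW _ fu_g)
  (finite_measure_integrable_cst P M mB) (aeW _ fu_le).
rewrite /condE; apply: cvgM (cvg_cst _).
rewrite -(fineK (integrable_fin_num mB ig)) in int_cvg.
exact: fine_cvg int_cvg.
Qed.

End conditional_expectation.

Lemma measurable_evAY {d : measure_display} {T : measurableType d} (n : nat)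
    (A Y : 'I_n -> T -> bool) (i : 'I_n) (a : bool) :
  measurable_fun setT (A i) -> measurable_fun setT (Y i) ->
  measurable (evAY A Y i a).
Proof.
move=> mA mY; rewrite (_ : evAY A Y i a = A i @^-1` [set a] `&` Y i @^-1` [set true]).
  by apply: measurableI; rewrite -[_ @^-1` _]setTI; [exact: mA | exact: mY].
by apply/seteqP; split => w.
Qed.

Theorem lemma1 (d dX : measure_display) (T : measurableType d) (R : realType)
  (Xt : measurableType dX) (P : probability T R) (n : nat)
  (X : 'I_n -> T -> Xt) (A Y : 'I_n -> T -> bool) (r : Xt -> R)
  (hX : forall i, measurable_fun setT (X i))
  (hA : forall i, measurable_fun setT (A i))
  (hY : forall i, measurable_fun setT (Y i))
  (hr : measurable_fun setT r)
  (hr01 : forall x, 0 <= r x <= 1)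
  (hrfin : finite_set (range r))
  (hid : ident_distr P (tupl X A Y))
  (hind : mutual_indep P (tupl X A Y))
  (hpos : forall i a, (0 < P (evAY A Y i a))%E) :
  let Rs := fun i w => r (X i w) in
  (forall i w, Zeps Rs eps i w @[eps --> +oo] --> Zmax Rs i w) /\
  (forall i, gamma P A Y Rs i eps @[eps --> +oo] -->
     condE P (Zmax Rs i) (evAY A Y i false) - condE P (Zmax Rs i) (evAY A Y i true)).
Proof.
move=> Rs; split => [i w|i]; first exact: Zeps_cvg_Zmax.
have mRs j : measurable_fun setT (Rs j) := measurableT_comp hr (hX j).
have condE_cvg a : condE P (Zeps Rs eps i) (evAY A Y i a) @[eps --> +oo] -->
    condE P (Zmax Rs i) (evAY A Y i a).
  apply: (condE_cvgy P 1).
  - exact: measurable_evAY.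
  - by move=> eps; exact: measurable_funTS (measurable_Zeps Rs eps i mRs).
  - by move=> eps w _; have /andP[Z0 Z1] := Zeps_ge0_le1 Rs eps i w; rewrite ger0_norm.
  - by move=> w _; exact: Zeps_cvg_Zmax.
exact: cvgB (condE_cvg false) (condE_cvg true).
Qed.
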